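(* Let $G=(V,E)$ be a connected, locally finite graph with edge weights $w_{xy}\ge w_{min}>0$ for all $xy\in E$ and with $\mu\le\mu_{max}$ on $V$. Suppose $u:(0,\infty)\times V\to(0,\infty)$ is $C^1$ in time and satisfies $$\partial_t(\log u)\ge\Psi_\Upsilon(\log u)-\eta(t)\quad\text{on }(0,\infty)\times V,$$ where $\eta:(0,\infty)\to[0,\infty)$ is continuous. Then for any $0<t_1<t_2$ and $x_1,x_2\in V$, $$u(t_1,x_1)\le u(t_2,x_2)\exp\Big(\int_{t_1}^{t_2}\eta(t)\,dt+\frac{2\mu_{max}\,d(x_1,x_2)^2}{w_{min}(t_2-t_1)}\Big),$$ where $d$ is the combinatorial graph distance.
   Context: Graphs are undirected; $x\sim y$ means $xy\in E$; $w_{xy}=w_{yx}>0$; $\mu:V\to(0,\infty)$. For $H:\mathbb R\to\mathbb R$ and $v:V\to\mathbb R$, $\Psi_H(v)(x)=\frac1{\mu(x)}\sum_{y\sim x}w_{xy}H(v(y)-v(x))$, and $\Upsilon(z)=e^z-1-z$. *)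

From Stdlib Require Import Reals Lra List.
Open Scope R_scope.

(* A locally finite graph on an arbitrary vertex type V is given by its
   neighbour lists: y ~ x  iff  In y (nbrs x). *)

Definition Upsilon (z : R) : R := exp z - 1 - z.

Fixpoint list_sum {V : Type} (f : V -> R) (l : list V) : R :=
  match l with
  | nil => 0
  | y :: l' => f y + list_sum f l'
  end.

Definition Psi {V : Type} (nbrs : V -> list V) (w : V -> V -> R) (mu : V -> R)
  (H : R -> R) (v : V -> R) (x : V) : R :=
  / mu x * list_sum (fun y => w x y * H (v y - v x)) (nbrs x).

Inductive walk {V : Type} (nbrs : V -> list V) : V -> V -> nat -> Prop :=
  | walk_nil : forall x, walk nbrs x x 0
  | walk_cons : forall x y z n, In y (nbrs x) -> walk nbrs y z n ->
      walk nbrs x z (S n).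

Definition is_graph_dist {V : Type} (nbrs : V -> list V) (x y : V) (n : nat) : Prop :=
  walk nbrs x y n /\ forall m, walk nbrs x y m -> (n <= m)%nat.

Definition graph_connected {V : Type} (nbrs : V -> list V) : Prop :=
  forall x y : V, exists n, walk nbrs x y n.

(* Put h(t,x) = log u(t,x) + int_{t1}^t eta.  The hypothesis says that h is
   nondecreasing in t and that along an edge x ~ y
     d/dt h(t,y) >= (wmin/mumax) Upsilon(h(t,x) - h(t,y)) >= c/2 (h(t,x) - h(t,y))^2
   with c = wmin/mumax.  If h(b,y) were below A := h(a,x) by more than
   2/(c(b-a)), then 1/(A - h(t,y)) would grow at rate at least c/2 on [a,b]
   and blow up before time b.  Hence h(a,x) - 2/(c(b-a)) <= h(b,y); chaining
   this along a shortest path with d equal time steps (t2-t1)/d gives the loss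
   d * 2d/(c(t2-t1)), and exponentiating gives the Harnack inequality. *)
From Pilot Require Import Defs.
From Stdlib Require Import Reals List Lra Lia.
From Coquelicot Require Import Coquelicot.
Open Scope R_scope.

Lemma increment_ge_of_derive_ge (f f' : R -> R) (a b k : R) : a <= b ->
  (forall s, a <= s <= b -> derivable_pt_lim f s (f' s)) ->
  (forall s, a <= s <= b -> k <= f' s) -> k * (b - a) <= f b - f a.
Proof.
  intros [Hab | <-] Hd Hk; [|lra].
  destruct (MVT_cor2 f f' a b Hab Hd) as [s [-> Hs]].
  apply Rmult_le_compat_r; [lra | apply Hk; lra].
Qed.

Lemma list_sum_nonneg {V : Type} (f : V -> R) (l : list V) :
  (forall z, In z l -> 0 <= f z) -> 0 <= Defs.list_sum f l.
Proof.
  induction l as [|y l IH]; simpl; intros Hf; [lra|].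
  pose proof (Hf y (or_introl eq_refl)).
  pose proof (IH (fun z Hz => Hf z (or_intror Hz))). lra.
Qed.

Lemma list_sum_ge_term {V : Type} (f : V -> R) (l : list V) (y : V) :
  (forall z, In z l -> 0 <= f z) -> In y l -> f y <= Defs.list_sum f l.
Proof.
  induction l as [|z l IH]; simpl; intros Hf Hy; [contradiction|].
  destruct Hy as [<- | Hy].
  - pose proof (list_sum_nonneg f l (fun z Hz => Hf z (or_intror Hz))). lra.
  - pose proof (Hf z (or_introl eq_refl)).
    pose proof (IH (fun z Hz => Hf z (or_intror Hz)) Hy). lra.
Qed.

Lemma Upsilon_ge0 z : 0 <= Upsilon z.
Proof. unfold Upsilon. pose proof (exp_ineq1_le z). lra. Qed.

Lemma Upsilon_ge_half_sq z : 0 <= z -> z ^ 2 / 2 <= Upsilon z.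
Proof.
  intros Hz.
  assert (Hincr := increment_ge_of_derive_ge
    (fun s => Upsilon s - s ^ 2 / 2) (fun s => exp s - 1 - s) 0 z 0 Hz).
  unfold Upsilon in *. rewrite exp_0 in Hincr.
  enough (0 * (z - 0) <= exp z - 1 - z - z ^ 2 / 2 - (1 - 1 - 0 - 0 ^ 2 / 2)) by lra.
  apply Hincr.
  - intros s _. apply is_derive_Reals. auto_derive; [exact I | field].
  - intros s _. pose proof (exp_ineq1_le s). lra.
Qed.

Section PsiBounds.

Variables (V : Type) (nbrs : V -> list V) (w : V -> V -> R) (mu : V -> R)
  (H : R -> R) (v : V -> R) (x : V).
Hypothesis mu_pos : 0 < mu x.
Hypothesis w_nonneg : forall y, In y (nbrs x) -> 0 <= w x y.
Hypothesis H_nonneg : forall z, 0 <= H z.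

Let term_nonneg : forall y, In y (nbrs x) -> 0 <= w x y * H (v y - v x).
Proof. intros y Hy. apply Rmult_le_pos; auto. Qed.

Lemma Psi_nonneg : 0 <= Psi nbrs w mu H v x.
Proof.
  apply Rmult_le_pos; [left; apply Rinv_0_lt_compat; exact mu_pos|].
  apply list_sum_nonneg, term_nonneg.
Qed.

Lemma Psi_ge_term (wmin mumax : R) (y : V) : In y (nbrs x) ->
  0 < wmin -> wmin <= w x y -> mu x <= mumax ->
  wmin / mumax * H (v y - v x) <= Psi nbrs w mu H v x.
Proof.
  intros Hy Hwmin Hw Hmu.
  pose proof (H_nonneg (v y - v x)).
  apply Rle_trans with (/ mu x * (w x y * H (v y - v x))).
  - unfold Rdiv. rewrite <- Rmult_assoc, (Rmult_comm wmin).
    apply Rmult_le_compat_r; [assumption|].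
    apply Rmult_le_compat; try lra.
    + left. apply Rinv_0_lt_compat. lra.
    + apply Rinv_le_contravar; assumption.
  - apply Rmult_le_compat_l; [left; apply Rinv_0_lt_compat; exact mu_pos|].
    apply (list_sum_ge_term (fun z => w x z * H (v z - v x))); assumption.
Qed.

End PsiBounds.

Lemma Upsilon_catch_up (f g g' : R -> R) (a b c : R) : 0 < c -> a < b ->
  (forall s, a <= s <= b -> f a <= f s) ->
  (forall s, a <= s <= b -> derivable_pt_lim g s (g' s)) ->
  (forall s, a <= s <= b -> c * Upsilon (f s - g s) <= g' s) ->
  f a - 2 / (c * (b - a)) <= g b.
Proof.
  intros Hc Hab Hf Hg Hg'.
  assert (Hloss : 0 < 2 / (c * (b - a))).
  { apply Rdiv_lt_0_compat; [lra | apply Rmult_lt_0_compat; lra]. }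
  set (A := f a).
  destruct (Rle_or_lt A (g b)) as [Hle | Hgt]; [lra|].
  assert (Hg_mono : forall s, a <= s <= b -> g s <= g b).
  { intros s Hs.
    enough (0 * (b - s) <= g b - g s) by lra.
    apply increment_ge_of_derive_ge with g'; [lra| |].
    - intros r Hr. apply Hg. lra.
    - intros r Hr. pose proof (Upsilon_ge0 (f r - g r)).
      pose proof (Hg' r ltac:(lra)). nra. }
  assert (Hgap : forall s, a <= s <= b -> 0 < A - g s).
  { intros s Hs. pose proof (Hg_mono s Hs). lra. }
  assert (Hrate : forall s, a <= s <= b -> c / 2 * (A - g s) ^ 2 <= g' s).
  { intros s Hs.
    assert (HA : A <= f s) by exact (Hf s Hs).
    pose proof (Hgap s Hs).
    pose proof (Upsilon_ge_half_sq (f s - g s) ltac:(lra)).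
    assert ((A - g s) ^ 2 <= (f s - g s) ^ 2) by (apply pow_incr; lra).
    pose proof (Hg' s Hs). nra. }
  assert (Hblowup : c / 2 * (b - a) <= / (A - g b) - / (A - g a)).
  { apply (increment_ge_of_derive_ge (fun s => / (A - g s))
      (fun s => g' s / (A - g s) ^ 2)); [lra| |].
    - intros s Hs. pose proof (Hgap s Hs).
      apply is_derive_Reals.
      replace (g' s / (A - g s) ^ 2) with (- (0 - g' s) / (A - g s) ^ 2) by (field; lra).
      apply (is_derive_inv (fun s => A - g s)); [|lra].
      apply is_derive_Reals, (derivable_pt_lim_minus (fun _ => A) g).
      + apply derivable_pt_lim_const.
      + apply Hg, Hs.
    - intros s Hs. pose proof (Hgap s Hs). pose proof (Hrate s Hs).
      apply Rmult_le_reg_r with ((A - g s) ^ 2); [apply pow_lt; lra|].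
      unfold Rdiv at 2. rewrite Rmult_assoc, Rinv_l; [lra|].
      apply pow_nonzero. lra. }
  assert (Hgb := Hgap b ltac:(lra)).
  assert (/ (A - g a) > 0) by (apply Rinv_0_lt_compat, Hgap; lra).
  assert (Hinv : c / 2 * (b - a) < / (A - g b)) by lra.
  assert (A - g b < / (c / 2 * (b - a))).
  { rewrite <- (Rinv_inv (A - g b)).
    apply Rinv_lt_contravar; [|exact Hinv].
    apply Rmult_lt_0_compat; [nra | now apply Rinv_0_lt_compat]. }
  replace (2 / (c * (b - a))) with (/ (c / 2 * (b - a))) by (field; lra).
  lra.
Qed.

Section HarnackAlongWalks.

Variables (V : Type) (nbrs : V -> list V) (h h' : R -> V -> R) (c : R).
Hypothesis nbrs_sym : forall x y, In y (nbrs x) -> In x (nbrs y).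
Hypothesis c_pos : 0 < c.
Hypothesis h_deriv :
  forall s x, 0 < s -> derivable_pt_lim (fun s => h s x) s (h' s x).
Hypothesis h'_nonneg : forall s x, 0 < s -> 0 <= h' s x.
Hypothesis h'_ge :
  forall s x y, 0 < s -> In y (nbrs x) -> c * Upsilon (h s y - h s x) <= h' s x.

Lemma h_nondecreasing a b x : 0 < a -> a <= b -> h a x <= h b x.
Proof.
  intros Ha Hab.
  enough (0 * (b - a) <= h b x - h a x) by lra.
  apply (increment_ge_of_derive_ge (fun s => h s x) (fun s => h' s x)); [lra| |].
  - intros s Hs. apply h_deriv. lra.
  - intros s Hs. apply h'_nonneg. lra.
Qed.

Lemma harnack_edge a b x y : 0 < a -> a < b -> In y (nbrs x) ->
  h a x - 2 / (c * (b - a)) <= h b y.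
Proof.
  intros Ha Hab Hy.
  apply (Upsilon_catch_up (fun s => h s x) (fun s => h s y) (fun s => h' s y)); auto.
  - intros s Hs. apply h_nondecreasing; lra.
  - intros s Hs. apply h_deriv. lra.
  - intros s Hs. apply h'_ge; [lra | now apply nbrs_sym].
Qed.

Lemma harnack_walk x z n : walk nbrs x z n -> forall a tau, 0 < a -> 0 < tau ->
  h a x - INR n * (2 / (c * tau)) <= h (a + INR n * tau) z.
Proof.
  induction 1 as [x | x y z n Hy _ IH]; intros a tau Ha Htau.
  - simpl. replace (a + 0 * tau) with a by ring. lra.
  - pose proof (harnack_edge a (a + tau) x y Ha ltac:(lra) Hy) as Hstep.
    replace (a + tau - a) with tau in Hstep by ring.
    pose proof (IH (a + tau) tau ltac:(lra) Htau).
    rewrite S_INR. replace (a + (INR n + 1) * tau) with (a + tau + INR n * tau) by ring.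
    lra.
Qed.

Lemma harnack_path x z n a b : walk nbrs x z n -> 0 < a -> a < b ->
  h a x - 2 * INR n ^ 2 / (c * (b - a)) <= h b z.
Proof.
  intros Hwalk Ha Hab.
  destruct n as [|n].
  - inversion Hwalk; subst. pose proof (h_nondecreasing a b z Ha ltac:(lra)).
    replace (2 * INR 0 ^ 2 / (c * (b - a))) with 0 by (simpl; field; lra). lra.
  - assert (Hn : 0 < INR (S n)) by (apply lt_0_INR; lia).
    pose proof (harnack_walk x z (S n) Hwalk a ((b - a) / INR (S n)) Ha
      ltac:(apply Rdiv_lt_0_compat; lra)) as Hchain.
    replace (a + INR (S n) * ((b - a) / INR (S n))) with b in Hchain by (field; lra).
    replace (2 * INR (S n) ^ 2 / (c * (b - a)))
      with (INR (S n) * (2 / (c * ((b - a) / INR (S n))))) by (field; lra).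
    exact Hchain.
Qed.

End HarnackAlongWalks.

Lemma derivable_pt_lim_RInt (f : R -> R) (a s : R) : 0 < a -> 0 < s ->
  (forall t, 0 < t -> continuity_pt f t) ->
  derivable_pt_lim (fun s => RInt f a s) s (f s).
Proof.
  intros Ha Hs Hf. apply is_derive_Reals, (is_derive_RInt f _ a).
  - assert (Hs2 : 0 < s / 2) by lra.
    exists (mkposreal _ Hs2). intros b Hb.
    assert (Hbs : Rabs (b - s) < s / 2) by exact Hb.
    apply Rabs_def2 in Hbs.
    apply (RInt_correct (V := R_CompleteNormedModule)), ex_RInt_continuous.
    intros t [Ht _]. apply continuity_pt_filterlim, Hf.
    assert (0 < Rmin a b) by (apply Rmin_glb_lt; lra). lra.
  - apply continuity_pt_filterlim, Hf, Hs.
Qed.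

Lemma derivable_pt_lim_ln_comp (f : R -> R) (s l : R) : 0 < f s ->
  derivable_pt_lim f s l -> derivable_pt_lim (fun t => ln (f t)) s (l / f s).
Proof.
  intros Hpos Hf.
  replace (l / f s) with (/ f s * l) by (unfold Rdiv; ring).
  apply (derivable_pt_lim_comp f ln); [exact Hf | now apply derivable_pt_lim_ln].
Qed.

Lemma le_mul_exp_of_ln_le (a b e : R) : 0 < a -> 0 < b ->
  ln a <= ln b + e -> a <= b * exp e.
Proof.
  intros Ha Hb Hle.
  rewrite <- (exp_ln a), <- (exp_ln b), <- exp_plus by assumption.
  destruct (Rle_lt_or_eq_dec _ _ Hle) as [Hlt | ->];
    [left; apply exp_increasing, Hlt | right; reflexivity].
Qed.

Theorem theorem6p1
  (V : Type) (nbrs : V -> list V)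
  (Hnodup : forall x, NoDup (nbrs x))
  (Hsym : forall x y, In y (nbrs x) -> In x (nbrs y))
  (Hconn : graph_connected nbrs)
  (w : V -> V -> R) (wmin : R) (mu : V -> R) (mumax : R)
  (Hwmin : 0 < wmin)
  (Hwsym : forall x y, In y (nbrs x) -> w x y = w y x)
  (Hw : forall x y, In y (nbrs x) -> wmin <= w x y)
  (Hmu : forall x, 0 < mu x)
  (Hmumax : forall x, mu x <= mumax)
  (u u' : R -> V -> R) (eta : R -> R)
  (Hupos : forall t x, 0 < t -> 0 < u t x)
  (Hderiv : forall t x, 0 < t -> derivable_pt_lim (fun s => u s x) t (u' t x))
  (Hderiv_cont : forall t x, 0 < t -> continuity_pt (fun s => u' s x) t)
  (Heta_cont : forall t, 0 < t -> continuity_pt eta t)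
  (Heta_nonneg : forall t, 0 < t -> 0 <= eta t)
  (Hineq : forall t x, 0 < t ->
     u' t x / u t x >= Psi nbrs w mu Upsilon (fun y => ln (u t y)) x - eta t) :
  forall (t1 t2 : R) (x1 x2 : V) (d : nat),
    0 < t1 -> t1 < t2 ->
    is_graph_dist nbrs x1 x2 d ->
    forall pr : Riemann_integrable eta t1 t2,
    u t1 x1 <= u t2 x2 *
      exp (RiemannInt pr + 2 * mumax * (INR d) ^ 2 / (wmin * (t2 - t1))).
Proof.
  intros t1 t2 x1 x2 d Ht1 Ht12 [Hwalk _] pr.
  assert (Hmumax0 : 0 < mumax) by (pose proof (Hmu x1); pose proof (Hmumax x1); lra).
  assert (Hw0 : forall x y, In y (nbrs x) -> 0 <= w x y)
    by (intros x y Hy; pose proof (Hw x y Hy); lra).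
  assert (Hlog : ln (u t1 x1) + RInt eta t1 t1 - 2 * INR d ^ 2 / (wmin / mumax * (t2 - t1))
                 <= ln (u t2 x2) + RInt eta t1 t2).
  { apply (harnack_path V nbrs (fun s x => ln (u s x) + RInt eta t1 s)
      (fun s x => u' s x / u s x + eta s) (wmin / mumax)); auto.
    - now apply Rdiv_lt_0_compat.
    - intros s x Hs. apply derivable_pt_lim_plus.
      + apply derivable_pt_lim_ln_comp; auto.
      + now apply derivable_pt_lim_RInt.
    - intros s x Hs. pose proof (Hineq s x Hs).
      pose proof (Psi_nonneg V nbrs w mu Upsilon (fun y => ln (u s y)) x
        (Hmu x) (Hw0 x) Upsilon_ge0). lra.
    - intros s x y Hs Hy. pose proof (Hineq s x Hs).
      pose proof (Psi_ge_term V nbrs w mu Upsilon (fun y => ln (u s y)) x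
        (Hmu x) (Hw0 x) Upsilon_ge0 wmin mumax y Hy Hwmin (Hw x y Hy) (Hmumax x)).
      replace (ln (u s y) + RInt eta t1 s - (ln (u s x) + RInt eta t1 s))
        with (ln (u s y) - ln (u s x)) by ring. lra. }
  rewrite RInt_point, (RInt_Reals _ _ _ pr) in Hlog. unfold zero in Hlog; simpl in Hlog.
  apply le_mul_exp_of_ln_le; [apply Hupos; lra .. |].
  replace (2 * mumax * INR d ^ 2 / (wmin * (t2 - t1)))
    with (2 * INR d ^ 2 / (wmin / mumax * (t2 - t1))) by (field; split; lra).
  lra.
Qed.
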